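(* Let $G$ be a group acting transitively on a set $X$. Then $\mathrm{Con}(G\curvearrowright X)\subseteq\mathrm{Con}(G)$.
   Context: For an action $G\curvearrowright X$, an ordered tuple $\mathfrak{g}=(g_1,\dots,g_n)$ of elements of $G$ and a finite partition $\mathcal{E}=\{E_1,\dots,E_m\}$ of $X$ (a configuration pair), a configuration is a tuple $C=(C_0,\dots,C_n)\in\{1,\dots,m\}^{n+1}$ such that some $x\in E_{C_0}$ satisfies $g_i\cdot x\in E_{C_i}$ for $i=1,\dots,n$; the set of these is $\mathrm{Con}(\mathfrak{g},\mathcal{E};X)$. Then $\mathrm{Con}(G\curvearrowright X)=\{\mathrm{Con}(\mathfrak{g},\mathcal{E};X): (\mathfrak{g},\mathcal{E})\text{ a configuration pair}\}$. $\mathrm{Con}(G)$ denotes $\mathrm{Con}(G\curvearrowright G)$ for the action of $G$ on itself by left multiplication. *)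

From mathcomp Require Import all_boot.
Set Implicit Arguments. Unset Strict Implicit. Unset Printing Implicit Defensive.

Record is_group (G : Type) (mul : G -> G -> G) (one : G) (inv : G -> G) : Prop := {
  grp_assoc : forall a b c, mul a (mul b c) = mul (mul a b) c;
  grp_mul1g : forall a, mul one a = a;
  grp_mulg1 : forall a, mul a one = a;
  grp_mulVg : forall a, mul (inv a) a = one;
  grp_mulgV : forall a, mul a (inv a) = one }.

Record is_action (G X : Type) (mul : G -> G -> G) (one : G)
    (act : G -> X -> X) : Prop := {
  act1 : forall x, act one x = x;
  actM : forall g h x, act (mul g h) x = act g (act h x) }.

Definition transitive_action (G X : Type) (act : G -> X -> X) : Prop :=
  (exists x : X, True) /\ forall x y : X, exists g : G, act g x = y.

(* A finite partition {E_0,...,E_(m-1)} of X, encoded by the labelling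
   E : X -> 'I_m (x lies in the block E x); blocks are nonempty. *)
Definition is_partition (X : Type) (m : nat) (E : X -> 'I_m) : Prop :=
  forall k : 'I_m, exists x : X, E x = k.

(* C = (C_0,...,C_n) is a configuration for the configuration pair (g, E):
   some x in E_(C_0) with g_i . x in E_(C_i) for i = 1..n. *)
Definition is_config (G X : Type) (act : G -> X -> X) (n m : nat)
    (g : 'I_n -> G) (E : X -> 'I_m) (C : 'I_n.+1 -> 'I_m) : Prop :=
  exists x : X, E x = C ord0 /\
    forall i : 'I_n, E (act (g i) x) = C (lift ord0 i).

(* S belongs to Con(G ↷ X): S = Con(g, E; X) for some configuration pair
   (g, E) with g an n-tuple and E a partition into m blocks. *)
Definition in_Con (G X : Type) (act : G -> X -> X) (n m : nat)
    (S : ('I_n.+1 -> 'I_m) -> Prop) : Prop :=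
  exists (g : 'I_n -> G) (E : X -> 'I_m),
    is_partition E /\ forall C, S C <-> is_config act g E C.

From mathcomp Require Import all_boot.

Set Implicit Arguments.
Unset Strict Implicit.
Unset Printing Implicit Defensive.

(* Fix x0 in X. The orbit map h |-> h . x0 from G (acting on itself by left
   multiplication) onto X is equivariant, and it is surjective by transitivity.
   Pulling a partition of X back along it gives a partition of G with exactly
   the same configurations, since a witness x = h . x0 in X corresponds to the
   witness h in G. *)

Section EquivariantPullback.

Variables (G X Y : Type) (actX : G -> X -> X) (actY : G -> Y -> Y) (f : Y -> X).
Hypothesis f_equivariant : forall g y, f (actY g y) = actX g (f y).
Hypothesis f_surjective : forall x, exists y, f y = x.

Lemma is_partition_comp (m : nat) (E : X -> 'I_m) :
  is_partition E -> is_partition (E \o f).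
Proof.
move=> E_part k; have [x Ex] := E_part k; have [y fy] := f_surjective x.
by exists y; rewrite /= fy.
Qed.

Lemma is_config_comp (n m : nat) (g : 'I_n -> G) (E : X -> 'I_m)
    (C : 'I_n.+1 -> 'I_m) :
  is_config actY g (E \o f) C <-> is_config actX g E C.
Proof.
split=> [[y [E0 Ei]] | [x [E0 Ei]]].
- exists (f y); split=> [|i]; first exact: E0.
  by rewrite -f_equivariant; apply: Ei.
- have [y fy] := f_surjective x; exists y; split=> /=; first by rewrite fy.
  by move=> i; rewrite f_equivariant fy.
Qed.

Lemma in_Con_comp (n m : nat) (S : ('I_n.+1 -> 'I_m) -> Prop) :
  in_Con actX S -> in_Con actY S.
Proof.
move=> [g [E [E_part SE]]]; exists g, (E \o f); split.
  exact: is_partition_comp.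
move=> C; exact: iff_trans (SE C) (iff_sym (is_config_comp g E C)).
Qed.

End EquivariantPullback.

Theorem mainTheorem5 (G X : Type) (mul : G -> G -> G) (one : G) (inv : G -> G)
    (act : G -> X -> X) :
  is_group mul one inv ->
  is_action mul one act ->
  transitive_action act ->
  forall (n m : nat) (S : ('I_n.+1 -> 'I_m) -> Prop),
    in_Con act S -> in_Con mul S.
Proof.
move=> _ act_law [[x0 _] act_trans] n m S.
apply: (in_Con_comp (f := act^~ x0)).
- by move=> g h; rewrite (actM act_law).
- exact: act_trans.
Qed.
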